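(* Let $\mathcal X\subseteq\mathbb{R}^d$ be compact, let $P$ be a probability measure supported on $\mathcal X$, let $r:\mathcal X\to\mathbb{R}$ be a measurable reward, and fix $\lambda\ge 0$. Let $T_\lambda:\mathbb{R}^d\to\mathcal X$ be a measurable map satisfying, for all $y$, $$T_\lambda(y)\in\operatorname*{argmax}_{x\in\mathcal X}\{r(x)-\lambda\|x-y\|^2\}.$$ Then the pushforward law $Q_\lambda=(T_\lambda)_\#P$ satisfies $$Q_\lambda\in\operatorname*{argmax}_{Q\in\Delta(\mathcal X)}\Big\{\mathbb E_Q[r]-\lambda\,\mathcal W_2^2(Q,P)\Big\}.$$
   Context: $\Delta(\mathcal X)$ is the set of probability measures on $\mathcal X$; $(T)_\#P$ is the law of $T(Y)$ for $Y\sim P$; $\mathcal W_2^2(Q,P)=\inf_{\gamma\in\Pi(Q,P)}\mathbb E_{(X,Y)\sim\gamma}\|X-Y\|_2^2$ with $\Pi(Q,P)$ the set of couplings; $\|\cdot\|$ is the Euclidean norm. *)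

From HB Require Import structures.
From mathcomp Require Import all_boot all_order all_algebra.
From mathcomp Require Import all_classical all_reals all_analysis.
Set Implicit Arguments. Unset Strict Implicit. Unset Printing Implicit Defensive.
Import Order.TTheory GRing.Theory Num.Theory.
Import numFieldNormedType.Exports.
Local Open Scope classical_set_scope.
Local Open Scope ring_scope.

(* R^d is represented by d.-tuple R, whose canonical measurable structure is
   the product (= Borel) sigma-algebra. *)
Notation Rd R d := (d.-tuple R).

Definition sqdist {R : realType} {d : nat} (x y : d.-tuple R) : R :=
  \sum_(i < d) (tnth x i - tnth y i) ^+ 2.

(* view of a point of R^d as a row vector, to use the Euclidean topology *)
Definition to_rV {R : realType} {d : nat} (x : d.-tuple R) : 'rV[R]_d :=
  \row_(i < d) tnth x i.

Definition is_coupling {R : realType} {d : nat}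
    (gamma : probability (d.-tuple R * d.-tuple R)%type R)
    (Q P : set (d.-tuple R) -> \bar R) : Prop :=
  (forall A, measurable A -> gamma (A `*` setT) = Q A) /\
  (forall B, measurable B -> gamma (setT `*` B) = P B).

Definition W2sq {R : realType} {d : nat}
    (Q P : set (d.-tuple R) -> \bar R) : \bar R :=
  ereal_inf [set (\int[gamma]_z (sqdist z.1 z.2)%:E)%E
            | gamma in [set gamma | @is_coupling R d gamma Q P]].

Definition objective {R : realType} {d : nat} (X : set (d.-tuple R))
    (r : d.-tuple R -> R) (lambda : R)
    (P Q : set (d.-tuple R) -> \bar R) : \bar R :=
  ((\int[Q]_(x in X) (r x)%:E) - lambda%:E * W2sq Q P)%E.

From HB Require Import structures.
From mathcomp Require Import all_boot all_order all_algebra.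
From mathcomp Require Import all_classical all_reals all_analysis.
From mathcomp Require Import measurable_realfun lra.
Set Implicit Arguments. Unset Strict Implicit. Unset Printing Implicit Defensive.
Import Order.TTheory GRing.Theory Num.Theory.
Import numFieldNormedType.Exports.
Local Open Scope classical_set_scope.
Local Open Scope ring_scope.

(* Since [X] is bounded and [r x - lambda |x - y|^2] is maximal at [T y], [r] is
   bounded above on [X] by some [M], so [E_Q[r] = M - E_Q[M - r]] makes sense for
   every [Q], even when [r] is not [Q]-integrable.  If [gamma] couples [Q] and [P],
   optimality of [T y] gives, pointwise,
     [M - r (T y) + lambda |T y - y|^2 <= (M - r x) + lambda |x - y|^2];
   integrating against [gamma] and taking the infimum over [gamma] shows that the
   objective at [Q] is at most [M - T_cost], where
   [T_cost := E_P[M - r (T y) + lambda |T y - y|^2]].  The coupling [(T y, y)_# P]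
   of [T_# P] and [P] shows that the objective at [T_# P] is at least [M - T_cost]. *)

Lemma sqdist_ge0 (R : realType) (d : nat) (x y : d.-tuple R) : 0 <= sqdist x y.
Proof. by apply: sumr_ge0 => i _; exact: sqr_ge0. Qed.

Lemma measurable_sqdist (R : realType) (d : nat) :
  measurable_fun [set: d.-tuple R * d.-tuple R] (fun z => sqdist z.1 z.2).
Proof.
apply: measurable_sum => i; apply: measurable_funX; apply: measurable_funB.
- exact: measurableT_comp (measurable_tnth i) measurable_fst.
- exact: measurableT_comp (measurable_tnth i) measurable_snd.
Qed.

Lemma compact_tuple_bounded (R : realType) (d : nat) (X : set (d.-tuple R)) :
  compact (to_rV @` X) -> exists B : R, forall x, X x -> forall i, `|tnth x i| <= B.
Proof.
move=> /compact_bounded [M [_ /(_ (M + 1)) HM]].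
have M_lt_M1 : M < M + 1 by rewrite ltrDl.
exists (M + 1) => x Xx i; have := HM M_lt_M1 (to_rV x) (ex_intro2 _ _ x Xx erefl).
apply: le_trans.
have -> : tnth x i = to_rV x ord0 i by rewrite mxE.
rewrite [leRHS]/Num.norm /= mx_normrE; exact: (le_bigmax _ _ (ord0, i)).
Qed.

Lemma compact_sqdist_bounded (R : realType) (d : nat) (X : set (d.-tuple R))
    (y : d.-tuple R) :
  compact (to_rV @` X) -> exists C : R, forall x, X x -> sqdist x y <= C.
Proof.
move=> /compact_tuple_bounded [B HB].
exists (\sum_(i < d) (B + `|tnth y i|) ^+ 2) => x Xx.
apply: ler_sum => i _; have /ler_normlP [? ?] := HB x Xx i.
have /ler_normlP [? ?] := lexx `|tnth y i|.
have : 0 <= (B + `|tnth y i| - (tnth x i - tnth y i)) *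
            (B + `|tnth y i| + (tnth x i - tnth y i)) by apply: mulr_ge0; lra.
nra.
Qed.

Lemma compact_penalized_ub (R : realType) (d : nat) (X : set (d.-tuple R))
    (r : d.-tuple R -> R) (lambda m : R) (y : d.-tuple R) :
  compact (to_rV @` X) -> 0 <= lambda ->
  (forall x, X x -> r x - lambda * sqdist x y <= m) ->
  exists M : R, forall x, X x -> r x <= M.
Proof.
move=> cX lambda0 rm; have [C HC] := compact_sqdist_bounded y cX.
exists (m + lambda * C) => x Xx.
have := ler_wpM2l lambda0 (HC x Xx); have := rm x Xx; lra.
Qed.

Section ereal_lemmas.
Local Open Scope ereal_scope.

Lemma integral_ub_sub d (T : measurableType d) (R : realType)
    (mu : probability T R) (D : set T) (f : T -> R) (M : R) :
  measurable D -> mu D = 1 -> measurable_fun D f -> (forall x, D x -> f x <= M)%R ->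
  \int[mu]_(x in D) (f x)%:E = M%:E - \int[mu]_(x in D) (M - f x)%:E.
Proof.
move=> mD muD mf fM; set g := fun x => (M - f x)%:E.
have g0 x : D x -> 0 <= g x by move=> Dx; rewrite lee_fin subr_ge0 fM.
have mg : measurable_fun D g.
  by apply/measurable_EFinP; apply: measurable_funB => //; exact: measurable_cst.
have intC c : \int[mu]_(x in D) c%:E = c%:E.
  by rewrite integral_cst // -[RHS]mule1; congr (_ * _); exact: muD.
have [gfin|ginf] : \int[mu]_(x in D) g x < +oo \/ \int[mu]_(x in D) g x = +oo.
  by case: (\int[mu]_(x in D) g x) => [r| |]; [left; rewrite ltry|right|left].
- have ig : mu.-integrable D g.
    apply/integrableP; split => //.
    by rewrite (eq_integral g) // => x /[!inE] Dx; rewrite gee0_abs // g0.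
  have iM : mu.-integrable D (EFin \o cst M) by exact: finite_measure_integrable_cst.
  rewrite -[in RHS](intC M) -integralB //; apply: eq_integral => x _.
  by rewrite /g /= -EFinD opprB addrC subrK.
(* [M - f <= max M 0 + f^-] forces [\int f^- = +oo], while [\int f^+ < +oo]. *)
- rewrite ginf /= integralE; set m := Num.max M 0%R.
  have : \int[mu]_(x in D) g x <= \int[mu]_(x in D) (m%:E + (EFin \o f)^\- x).
    apply: ge0_le_integral => //.
    + apply: emeasurable_funD; first exact: measurable_cst.
      by apply: measurable_funeneg; apply/measurable_EFinP.
    + move=> x Dx; rewrite /g funenegE /= -EFin_max -EFinD lee_fin.
      by apply: lerD; rewrite le_max lexx.
  rewrite ge0_integralD //; last 2 first.
  - by move=> x _; rewrite lee_fin le_max lexx orbT.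
  - by apply: measurable_funeneg; apply/measurable_EFinP.
  rewrite ginf intC leye_eq.
  by case: (\int[mu]_(x in D) _ ^\- x) => [r| |] //= _; rewrite addeNy.
Qed.

Lemma lee_adde_mule_ereal_inf (R : realType) (S : set (\bar R)) (B H : \bar R) (l : R) :
  (0 <= l)%R -> 0 <= B -> S !=set0 -> (forall s, S s -> 0 <= s) ->
  (forall s, S s -> H <= B + l%:E * s) -> H <= B + l%:E * ereal_inf S.
Proof.
rewrite le_eqVlt => /orP[/eqP <- _ [s0 Ss0] _ HS|l_gt0 B0 _ S0 HS].
  by have := HS s0 Ss0; rewrite !mul0e.
rewrite -ereal_inf_pZl //.
have lS0 : 0 <= ereal_inf [set l%:E * x | x in S].
  by apply/ereal_infP => _ [s Ss <-]; apply: mule_ge0; [rewrite lee_fin ltW|exact: S0].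
case: B B0 HS => [b| |] // B0 HS; last first.
  by rewrite addye ?leey // gt_eqF // (lt_le_trans _ lS0).
rewrite -leeBlDl //; apply/ereal_infP => _ [s Ss <-]; rewrite leeBlDl //; exact: HS.
Qed.

End ereal_lemmas.

Section coupling.
Local Open Scope ereal_scope.
Context {R : realType} {d : nat}.
Variables (Q P : probability (d.-tuple R) R)
  (gam : probability (d.-tuple R * d.-tuple R)%type R).
Hypothesis gamQP : is_coupling gam Q P.

Lemma coupling_integral_snd (h : d.-tuple R -> \bar R) :
  measurable_fun setT h -> (forall y, 0 <= h y) ->
  \int[P]_y h y = \int[gam]_z h z.2.
Proof.
move=> mh h0; rewrite (eq_measure_integral (pushforward gam snd)); last first.
  by move=> A mA _; rewrite /pushforward /= -gamQP.2 // setTX.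
by rewrite (ge0_integral_pushforward measurable_snd gam measurableT mh) ?preimage_setT.
Qed.

Lemma coupling_integral_fst (X : set (d.-tuple R)) (g : d.-tuple R -> \bar R) :
  measurable X -> measurable_fun X g -> (forall x, X x -> 0 <= g x) ->
  \int[Q]_(x in X) g x = \int[gam]_(z in X `*` setT) g z.1.
Proof.
move=> mX mg g0; rewrite setXT -(ge0_integral_pushforward measurable_fst gam mX mg).
  by apply: eq_measure_integral => A mA _; rewrite /pushforward /= -gamQP.1 // setXT.
by move=> x /[!inE]; exact: g0.
Qed.

Lemma coupling_integral_setXT (X : set (d.-tuple R))
    (f : d.-tuple R * d.-tuple R -> \bar R) :
  measurable X -> Q X = 1 -> measurable_fun setT f -> (forall z, 0 <= f z) ->
  \int[gam]_z f z = \int[gam]_(z in X `*` setT) f z.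
Proof.
move=> mX QX mf f0; have mXT : measurable (X `*` [set: d.-tuple R]) by exact: measurableX.
rewrite (ge0_negligible_integral (N := ~` (X `*` setT))) ?setTD ?setCK //.
- exact: measurableC.
- by have := probability_setC gam mXT; rewrite gamQP.1 // QX subee.
Qed.

Lemma coupling_integral_le (X : set (d.-tuple R)) (g h : d.-tuple R -> \bar R)
    (c : d.-tuple R * d.-tuple R -> R) (l : R) :
  measurable X -> Q X = 1 -> (0 <= l)%R ->
  measurable_fun X g -> (forall x, X x -> 0 <= g x) ->
  measurable_fun setT h -> (forall y, 0 <= h y) ->
  measurable_fun setT c -> (forall z, 0 <= c z)%R ->
  (forall x y, X x -> h y <= g x + l%:E * (c (x, y))%:E) ->
  \int[P]_y h y <= \int[Q]_(x in X) g x + l%:E * \int[gam]_z (c z)%:E.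
Proof.
move=> mX QX l0 mg g0 mh h0 mc c0 hgc.
have mXT : measurable (X `*` [set: d.-tuple R]) by exact: measurableX.
have mgfst : measurable_fun (X `*` [set: d.-tuple R]) (g \o fst).
  apply: (measurable_comp mX _ mg); first by move=> _ [z [Xz _] <-].
  exact: measurable_funTS measurable_fst.
have mcE : measurable_fun setT (fun z => (c z)%:E) by exact/measurable_EFinP.
have mcX : measurable_fun (X `*` [set: d.-tuple R]) (fun z => (c z)%:E).
  exact: measurable_funTS.
rewrite coupling_integral_snd // (coupling_integral_setXT mX QX); first last.
- by move=> z; exact: h0.
- exact: measurableT_comp.
rewrite coupling_integral_fst //.
apply: (@le_trans _ _ (\int[gam]_(z in X `*` setT) (g z.1 + l%:E * (c z)%:E))).
  apply: ge0_le_integral => //.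
  - exact: measurable_funTS (measurableT_comp mh measurable_snd).
  - by apply: emeasurable_funD => //; exact: emeasurable_funM.
  - by move=> [x y] [Xx _]; exact: hgc.
rewrite ge0_integralD //; first last.
- exact: emeasurable_funM.
- by move=> z _; rewrite mule_ge0 ?lee_fin.
- by move=> [x y] [Xx _]; exact: g0.
rewrite ge0_integralZl //; last by move=> z _; rewrite lee_fin.
apply: leeD => //; apply: lee_wpmul2l; first by rewrite lee_fin.
by apply: ge0_subset_integral => // z _; rewrite lee_fin.
Qed.

End coupling.

Section W2sq.
Local Open Scope ereal_scope.
Context {R : realType} {d : nat}.

Lemma W2sq_ge0 (Q P : set (d.-tuple R) -> \bar R) : 0 <= W2sq Q P.
Proof.
by apply/ereal_infP => _ [gam _ <-]; apply: integral_ge0 => z _; rewrite lee_fin sqdist_ge0.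
Qed.

Lemma product_is_coupling (Q P : probability (d.-tuple R) R) : is_coupling (Q \x P) Q P.
Proof.
split=> [A mA|B mB].
- by rewrite -[RHS]mule1 -(probability_setT P); exact: product_measure1E.
- by rewrite -[RHS]mul1e -(probability_setT Q); exact: product_measure1E.
Qed.

Lemma W2sq_pushforward_le (P : probability (d.-tuple R) R) (T : d.-tuple R -> d.-tuple R) :
  measurable_fun setT T -> W2sq (pushforward P T) P <= \int[P]_y (sqdist (T y) y)%:E.
Proof.
move=> mT; have mF : measurable_fun setT (fun y => (T y, y)) by exact: measurable_fun_pair.
pose F : {mfun _ >-> _} := mfun_Sub (mem_set mF : _ \in mfun).
apply: ereal_inf_lbound; exists (distribution P F).
  by split=> A mA; rewrite /distribution /pushforward /=; congr (P _);
    apply/seteqP; split=> y /= => [[]|].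
rewrite /distribution (ge0_integral_pushforward mF P measurableT) //.
- by apply/measurable_EFinP; exact: measurable_sqdist.
- by move=> z _; rewrite lee_fin sqdist_ge0.
Qed.

Lemma W2sq_weak_duality (Q P : probability (d.-tuple R) R) (X : set (d.-tuple R))
    (g h : d.-tuple R -> \bar R) (l : R) :
  measurable X -> Q X = 1 -> (0 <= l)%R ->
  measurable_fun X g -> (forall x, X x -> 0 <= g x) ->
  measurable_fun setT h -> (forall y, 0 <= h y) ->
  (forall x y, X x -> h y <= g x + l%:E * (sqdist x y)%:E) ->
  \int[P]_y h y <= \int[Q]_(x in X) g x + l%:E * W2sq Q P.
Proof.
move=> mX QX l0 mg g0 mh h0 hg; apply: lee_adde_mule_ereal_inf => //.
- by apply: integral_ge0 => x Xx; exact: g0.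
- exists (\int[Q \x P]_z (sqdist z.1 z.2)%:E), (Q \x P) => //.
  exact: product_is_coupling.
- by move=> _ [gam _ <-]; apply: integral_ge0 => z _; rewrite lee_fin sqdist_ge0.
move=> _ [gam gamQP <-].
apply: (coupling_integral_le (c := fun z => sqdist z.1 z.2) gamQP) => //.
- exact: measurable_sqdist.
- by move=> z; exact: sqdist_ge0.
Qed.

End W2sq.

Section penalized_transport.
Local Open Scope ereal_scope.
Context {R : realType} {d : nat}.
Variables (X : set (d.-tuple R)) (P : probability (d.-tuple R) R)
  (r : d.-tuple R -> R) (lambda M : R) (T : d.-tuple R -> d.-tuple R).
Hypotheses (mX : measurable X) (mr : measurable_fun X r) (lambda0 : (0 <= lambda)%R)
  (mT : measurable_fun setT T) (TX : forall y, X (T y))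
  (T_argmax : forall y x, X x ->
     (r x - lambda * sqdist x y <= r (T y) - lambda * sqdist (T y) y)%R)
  (r_le_M : forall x, X x -> (r x <= M)%R).

Lemma objective_ub_sub (Q : probability (d.-tuple R) R) : Q X = 1 ->
  objective X r lambda P Q =
  M%:E - (\int[Q]_(x in X) (M - r x)%:E + lambda%:E * W2sq Q P).
Proof.
move=> QX; rewrite /objective (integral_ub_sub mX QX mr r_le_M) oppeD ?addeA //.
by rewrite ge0_adde_def // inE ?mule_ge0 ?W2sq_ge0 ?lee_fin //;
  apply: integral_ge0 => x Xx; rewrite lee_fin subr_ge0 r_le_M.
Qed.

Let measurable_rT : measurable_fun setT (r \o T).
Proof. by apply: (measurable_comp mX) => // _ [y _ <-]; exact: TX. Qed.

Let measurable_sqdistT : measurable_fun setT (fun y => sqdist (T y) y).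
Proof.
have mF : measurable_fun setT (fun y => (T y, y)) by exact: measurable_fun_pair.
exact: measurableT_comp (@measurable_sqdist R d) mF.
Qed.

Let T_cost := \int[P]_y (M - r (T y) + lambda * sqdist (T y) y)%:E.

Lemma objective_ub (Q : probability (d.-tuple R) R) : Q X = 1 ->
  objective X r lambda P Q <= M%:E - T_cost.
Proof.
move=> QX; rewrite objective_ub_sub //; apply: leeB => //.
apply: W2sq_weak_duality => //.
- by apply/measurable_EFinP; apply: measurable_funB => //; exact: measurable_cst.
- by move=> x Xx; rewrite lee_fin subr_ge0 r_le_M.
- apply/measurable_EFinP; apply: measurable_funD; last exact: measurable_funM.
  by apply: measurable_funB => //; exact: measurable_cst.
- by move=> y; rewrite lee_fin addr_ge0 ?mulr_ge0 ?sqdist_ge0 // subr_ge0 r_le_M.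
- by move=> x y Xx; rewrite -EFinM -EFinD lee_fin; have := T_argmax y Xx; lra.
Qed.

Let T_cost_split : T_cost =
  \int[P]_y (M - r (T y))%:E + lambda%:E * \int[P]_y (sqdist (T y) y)%:E.
Proof.
rewrite -ge0_integralZl //; last 2 first.
- exact/measurable_EFinP.
- by move=> y _; rewrite lee_fin sqdist_ge0.
rewrite -ge0_integralD //.
- by move=> y _; rewrite lee_fin subr_ge0 r_le_M.
- by apply/measurable_EFinP; apply: measurable_funB => //; exact: measurable_cst.
- by move=> y _; rewrite mule_ge0 ?lee_fin ?sqdist_ge0.
- by apply: emeasurable_funM => //; apply/measurable_EFinP.
Qed.

Let preimage_T_X : T @^-1` X = setT.
Proof. by apply/seteqP; split=> y // _; exact: TX. Qed.

Lemma pushforward_T_X : pushforward P T X = 1.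
Proof. by rewrite /pushforward preimage_T_X probability_setT. Qed.

Lemma objective_pushforward_lb : M%:E - T_cost <= objective X r lambda P (pushforward P T).
Proof.
pose TP := distribution P (mfun_Sub (mem_set mT : T \in mfun)).
have TPX : TP X = 1 := pushforward_T_X.
rewrite (objective_ub_sub TPX); apply: leeB => //.
have integral_TP : \int[TP]_(x in X) (M - r x)%:E = \int[P]_y (M - r (T y))%:E.
  rewrite ge0_integral_pushforward ?preimage_T_X //.
  - by apply/measurable_EFinP; apply: measurable_funB => //; exact: measurable_cst.
  - by move=> x /[!inE] Xx; rewrite lee_fin subr_ge0 r_le_M.
rewrite integral_TP T_cost_split; apply: leeD => //.
apply: lee_wpmul2l; first by rewrite lee_fin.
exact: W2sq_pushforward_le.
Qed.

End penalized_transport.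

Theorem theorem4p1 (R : realType) (d : nat) (X : set (d.-tuple R))
  (P : probability (d.-tuple R) R) (r : d.-tuple R -> R) (lambda : R)
  (T : d.-tuple R -> d.-tuple R) :
  compact (to_rV @` X) ->
  measurable X ->
  P X = 1%E ->
  measurable_fun X r ->
  0 <= lambda ->
  measurable_fun [set: d.-tuple R] T ->
  (forall y, X (T y) /\
     (forall x, X x -> r x - lambda * sqdist x y <= r (T y) - lambda * sqdist (T y) y)) ->
  pushforward P T X = 1%E /\
  (forall Q : probability (d.-tuple R) R, Q X = 1%E ->
     (objective X r lambda P Q <= objective X r lambda P (pushforward P T))%E).
Proof.
move=> cX mX _ mr lambda0 mT T_opt.
have TX y : X (T y) := (T_opt y).1.
have T_argmax y := (T_opt y).2.
have [M r_le_M] : exists M, forall x, X x -> r x <= M.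
  exact: compact_penalized_ub cX lambda0 (T_argmax [tuple 0 | _ < d]).
split; first exact: pushforward_T_X.
move=> Q QX; apply: le_trans (objective_pushforward_lb P mX mr lambda0 mT TX r_le_M).
exact: objective_ub.
Qed.
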